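(* Let $p\in]1,+\infty[$. Consider the implicit scheme $\frac{\mathbf u^k-\mathbf u^{k-1}}{\tau_{k-1}}=-\Delta_p^{\mathbf K}\mathbf u^k+\mathbf f^k$, $k\in[N]$, $\mathbf u^0=\mathbf g$, with kernel $\mathbf K$, data $(\mathbf f^k)_k,\mathbf g$ and step sizes $\tau_{k-1}>0$. Assume $I_n\mathbf K$ is nonnegative, measurable, symmetric with $\sup_x\int_\Omega I_n\mathbf K(x,y)dy<\infty$; that $I_n\mathbf g\in L^{\max(p,q)}(\Omega)$ for some $q\in[1,+\infty]$ with $\sup_n\|I_n\mathbf g\|_{L^q(\Omega)}<+\infty$; and that $\bar f_n\in L^1([0,T];L^{\max(p,q)}(\Omega))$ with $\sup_n\|\bar f_n\|_{L^1([0,T];L^q(\Omega))}<+\infty$. Then $\bar u_n(\cdot,t)\in L^{\max(p,q)}(\Omega)$ for all $t\in[0,T]$ and $\sup_{t\in[0,T],n\in\mathbb N}\|\bar u_n(\cdot,t)\|_{L^q(\Omega)}<+\infty$.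
   Context: $d\ge1$, $\Omega=[0,1]^d$, hypercubic cells $\Omega^n_{\mathbf i}$ of measures $h_{\mathbf i}$, $I_n$ the piecewise-constant injector on cells (resp. products of cells). $\Psi(s)=|s|^{p-2}s$; $(\Delta_p^{\mathbf K}\mathbf u)_{\mathbf i}=-\sum_{\mathbf j}h_{\mathbf j}\mathbf K_{\mathbf i\mathbf j}\Psi(\mathbf u_{\mathbf j}-\mathbf u_{\mathbf i})$. Time partition $0=t_0<\dots<t_N=T$, $\tau_{k-1}=t_k-t_{k-1}$. With $u_n^k=I_n\mathbf u^k$, $f_n^k=I_n\mathbf f^k$: $\bar u_n(x,t)=u_n^k(x)$ and $\bar f_n(x,t)=f_n^k(x)$ for $t\in]t_{k-1},t_k]$. *)

From HB Require Import structures.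
From mathcomp Require Import all_boot all_order all_algebra.
From mathcomp Require Import all_classical all_reals.
From mathcomp Require Import ereal exp.

Set Implicit Arguments.
Unset Strict Implicit.
Unset Printing Implicit Defensive.

Import Order.TTheory GRing.Theory Num.Theory.
Local Open Scope ring_scope.

(* A tensor-product grid of Omega = [0,1]^d into hypercubic cells:
   along coordinate l, [0,1] is cut at 0 = gx l 0 < gx l 1 < ... < gx l (gM l) = 1.
   The cell with multi-index i is prod_l ]gx l (i l), gx l (i l).+1]. *)
Record grid (R : realType) (d : nat) := Grid {
  gM : 'I_d -> nat;
  gx : 'I_d -> nat -> R;
  gx0 : forall l, gx l 0 = 0;
  gx1 : forall l, gx l (gM l) = 1;
  gx_incr : forall l k, (k < gM l)%N -> gx l k < gx l k.+1 }.

Definition cell (R : realType) (d : nat) (G : grid R d) : finType :=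
  {dffun forall l : 'I_d, 'I_(gM G l)}.

Definition cellh (R : realType) (d : nat) (G : grid R d) (i : cell G) : R :=
  \prod_(l < d) (gx G l (i l).+1 - gx G l (i l)).

(* ||I_n v||_{L^q(Omega)} for the piecewise-constant injection of v,
   q in [1, +oo]: (sum_i h_i |v_i|^q)^(1/q), resp. max_i |v_i| (all h_i > 0). *)
Definition wnorm (R : realType) (C : finType) (h : C -> R) (q : \bar R)
    (v : C -> R) : R :=
  match q with
  | EFin r => (\sum_i h i * `|v i| `^ r) `^ r^-1
  | EPInf => \big[Num.max/0]_i `|v i|
  | ENInf => 0
  end.

Definition Psi (R : realType) (p : R) (s : R) : R := `|s| `^ (p - 2) * s.

Definition plap (R : realType) (C : finType) (h : C -> R) (p : R)
    (K : C -> C -> R) (v : C -> R) (i : C) : R :=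
  - \sum_j h j * K i j * Psi p (v j - v i).

(* time index k such that t in ]t_{k-1}, t_k] (k = 0 for t = 0 = t_0) *)
Definition tindex (R : realType) (tt : nat -> R) (N : nat) (t : R) : nat :=
  find (fun k => t <= tt k) (iota 0 N.+1).

Definition ubar (R : realType) (C : Type) (tt : nat -> R) (N : nat)
    (u : nat -> C -> R) (t : R) : C -> R :=
  u (tindex tt N t).

From HB Require Import structures.
From mathcomp Require Import all_boot all_order all_algebra.
From mathcomp Require Import all_classical all_reals.
From mathcomp Require Import ereal exp.
From mathcomp Require Import ring lra.

Set Implicit Arguments.
Unset Strict Implicit.
Unset Printing Implicit Defensive.

Import Order.TTheory GRing.Theory Num.Theory.
Local Open Scope ring_scope.

(* Each implicit step reads u^k + tau Delta_p^K u^k = u^(k-1) + tau f^k, so it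
   suffices that the resolvent of the discrete p-Laplacian does not increase
   any weighted l^q norm, 1 <= q <= +oo.  For finite q, pair the equation with
   the signed power sg(w) |w|^(q-1): as K is symmetric and Psi is odd,
   symmetrising the double sum in (i, j) shows that this pairing is
   nonnegative on Delta_p^K w, and Hoelder's inequality turns
   ||w||_q^q <= <w + tau Delta_p^K w, sg(w) |w|^(q-1)> into
   ||w||_q <= ||w + tau Delta_p^K w||_q.  For q = +oo this is the discrete
   maximum principle at a cell where |w| is largest.  Minkowski's inequality
   then gives ||u^k||_q <= ||u^(k-1)||_q + tau_(k-1) ||f^k||_q, and summing
   over k bounds ||u_n(t)||_q by sup_n ||I_n g||_q + sup_n ||f_n||_(L^1 L^q). *)

Section SignedPower.
Variable R : realType.
Implicit Types r s a b : R.

Definition sgpowR r s := Num.sg s * `|s| `^ (r - 1).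

Lemma sgpowR_homo r : 1 <= r -> {homo sgpowR r : a b / a <= b}.
Proof.
move=> r1 a b ab; have r10 : 0 <= r - 1 by rewrite subr_ge0.
rewrite /sgpowR; have [a0|a0|a0] := ltgtP a 0.
- have [b0|b0|->] := ltgtP b 0.
  + rewrite !ltr0_sg // !mulN1r lerN2 ge0_ler_powR // ?nnegrE //.
    by rewrite !ltr0_norm // lerN2.
  + rewrite ltr0_sg // gtr0_sg // mulN1r mul1r.
    by rewrite (le_trans _ (powR_ge0 _ _)) // oppr_le0 powR_ge0.
  + by rewrite ltr0_sg // sgr0 mulN1r mul0r oppr_le0 powR_ge0.
- have b0 : 0 < b by apply: lt_le_trans ab.
  by rewrite !gtr0_sg // !mul1r ge0_ler_powR // ?nnegrE // !gtr0_norm.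
- move: ab; rewrite a0 sgr0 mul0r => b0.
  by rewrite mulr_ge0 ?powR_ge0 // sgr_ge0.
Qed.

Lemma mul_sgpowR r s : 0 < r -> s * sgpowR r s = `|s| `^ r.
Proof.
by move=> r0; rewrite /sgpowR mulrA [s * _]mulrC -normrEsg mulr_powRB1.
Qed.

Lemma norm_sgpowR r s : `|sgpowR r s| <= `|s| `^ (r - 1).
Proof.
rewrite /sgpowR normrM norm_powR // normr_id.
have [->|s0] := eqVneq s 0; first by rewrite sgr0 normr0 mul0r powR_ge0.
by rewrite normr_sg s0 mul1r.
Qed.

Lemma young_powR r a b : 1 <= r -> 0 <= a -> 0 <= b ->
  a * b `^ (r - 1) <= a `^ r / r + (1 - r^-1) * b `^ r.
Proof.
move=> r1 a0 b0; have [<-|rn1] := eqVneq 1 r.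
  by rewrite subrr powRr0 powRr1 // invr1 !mulr1 subrr mul0r addr0.
have r1' : 1 < r by rewrite lt_neqAle rn1.
have r0 : 0 < r by apply: lt_trans r1'.
have rm0 : 0 < r - 1 by rewrite subr_gt0.
have conj_exps : r^-1 + (r / (r - 1))^-1 = 1.
  by rewrite invf_div; field; rewrite gt_eqF.
have := conjugate_powR a0 (powR_ge0 b (r - 1)) r0 (divr_gt0 r0 rm0) conj_exps.
rewrite -powRrM mulrCA mulfV ?gt_eqF // mulr1 invf_div.
suff -> : (1 - r^-1) * b `^ r = b `^ r * ((r - 1) / r) by [].
by field; rewrite gt_eqF.
Qed.

End SignedPower.

Section WeightedNorms.
Variables (R : realType) (C : finType) (h : C -> R).
Hypothesis h_gt0 : forall i, 0 < h i.
Implicit Types (c : R) (a b v w x y : C -> R).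

Lemma wnorm_ge0 q v : 0 <= wnorm h q v.
Proof. by case: q => [r||] /=; rewrite ?powR_ge0 ?bigmax_ge_id. Qed.

Lemma wsum_powR_ge0 r v : 0 <= \sum_i h i * `|v i| `^ r.
Proof. by apply: sumr_ge0 => i _; rewrite mulr_ge0 ?powR_ge0 ?ltW. Qed.

Lemma wnormZ q c v : q != 0%:E ->
  wnorm h q (fun i => c * v i) = `|c| * wnorm h q v.
Proof.
case: q => [r||] //= r0; last by rewrite mulr0.
- under eq_bigr do rewrite normrM powRM // mulrCA.
  rewrite -mulr_sumr powRM ?powR_ge0 ?wsum_powR_ge0 //.
  by rewrite -powRrM mulfV // powRr1.
- rewrite (big_endo _ (fun m1 m2 => maxr_pMr m1 m2 (normr_ge0 c)) (mulr0 _)).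
  by under eq_bigr do rewrite normrM.
Qed.

Section FiniteExponent.
Variable r : R.
Hypothesis r_ge1 : 1 <= r.
Let r_gt0 : 0 < r := lt_le_trans ltr01 r_ge1.

Lemma wnorm_powR v : wnorm h r%:E v `^ r = \sum_i h i * `|v i| `^ r.
Proof.
by rewrite /= -powRrM mulVf ?gt_eqF // powRr1 // wsum_powR_ge0.
Qed.

Lemma wnorm_eq0 v : wnorm h r%:E v = 0 -> forall i, v i = 0.
Proof.
move=> /(congr1 (fun z => z `^ r)); rewrite wnorm_powR powR0 ?gt_eqF // => /eqP.
rewrite psumr_eq0 => [/allP v0 i|i _]; last by rewrite mulr_ge0 ?powR_ge0 ?ltW.
move: (v0 i (mem_index_enum i)); rewrite /= mulf_eq0 gt_eqF //=.
by move=> /eqP /powR_eq0_eq0 /normr0_eq0.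
Qed.

Lemma holder_wnorm1 x w : wnorm h r%:E x = 1 -> wnorm h r%:E w = 1 ->
  \sum_i h i * (`|x i| * `|w i| `^ (r - 1)) <= 1.
Proof.
move=> x1 w1.
have sum1 v : wnorm h r%:E v = 1 -> \sum_i h i * `|v i| `^ r = 1.
  by move=> v1; rewrite -wnorm_powR v1 powR1.
apply: (@le_trans _ _
  (\sum_i h i * (`|x i| `^ r / r + (1 - r^-1) * `|w i| `^ r))).
  by apply: ler_sum => i _; rewrite ler_pM2l // young_powR.
have -> : \sum_i h i * (`|x i| `^ r / r + (1 - r^-1) * `|w i| `^ r)
    = (\sum_i h i * `|x i| `^ r) / r + (1 - r^-1) * \sum_i h i * `|w i| `^ r.
  rewrite mulr_suml mulr_sumr -big_split /=.
  by apply: eq_bigr => i _; ring.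
by rewrite !sum1 // mul1r mulr1 subrKC.
Qed.

Lemma holder_wnorm x w :
  \sum_i h i * (`|x i| * `|w i| `^ (r - 1))
    <= wnorm h r%:E x * wnorm h r%:E w `^ (r - 1).
Proof.
have [r_eq1|rn1] := eqVneq r 1.
  rewrite /= r_eq1 subrr powRr0 invr1 mulr1 powRr1 ?wsum_powR_ge0 //.
  by apply: ler_sum => i _; rewrite powRr0 mulr1 powRr1.
set A := wnorm h r%:E x; set B := wnorm h r%:E w.
have [A0|A0] := eqVneq A 0.
  rewrite big1 ?mulr_ge0 ?wnorm_ge0 ?powR_ge0 // => i _.
  by rewrite (wnorm_eq0 A0) normr0 !mul0r mulr0.
have [B0|B0] := eqVneq B 0.
  rewrite big1 ?mulr_ge0 ?wnorm_ge0 ?powR_ge0 // => i _.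
  by rewrite (wnorm_eq0 B0) normr0 powR0 ?mulr0 // subr_eq0.
have Ap : 0 < A by rewrite lt_def A0 wnorm_ge0.
have Bp : 0 < B by rewrite lt_def B0 wnorm_ge0.
have normalized v V : 0 < V -> wnorm h r%:E v = V ->
    wnorm h r%:E (fun i => V^-1 * v i) = 1.
  move=> V0 vV; rewrite wnormZ ?eqe ?gt_eqF // vV.
  by rewrite gtr0_norm ?invr_gt0 // mulVf ?gt_eqF.
have := holder_wnorm1 (normalized x A Ap erefl) (normalized w B Bp erefl).
clearbody A B; have Br : 0 < B `^ (r - 1) by rewrite powR_gt0.
suff -> : \sum_i h i * (`|x i| * `|w i| `^ (r - 1)) = A * B `^ (r - 1) *
    \sum_i h i * (`|A^-1 * x i| * `|B^-1 * w i| `^ (r - 1)).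
  by move=> S1; rewrite -[X in _ <= X]mulr1 ler_pM2l // mulr_gt0.
rewrite mulr_sumr; apply: eq_bigr => i _.
have [Ai Bi] : 0 < A^-1 /\ 0 < B^-1 by rewrite !invr_gt0.
rewrite !normrM (gtr0_norm Ai) (gtr0_norm Bi) powRM ?normr_ge0 ?ltW //.
rewrite -(powR_inv1 (ltW Bp)) powRAC powR_inv1 ?powR_ge0 //.
by field; rewrite !gt_eqF.
Qed.

Lemma wnorm_le_of_powR_bound w c : 0 <= c ->
  \sum_i h i * `|w i| `^ r <= c * wnorm h r%:E w `^ (r - 1) ->
  wnorm h r%:E w <= c.
Proof.
move=> c0; rewrite -wnorm_powR -(mulr_powRB1 (wnorm_ge0 _ _) r_gt0).
have [->//|W0] := eqVneq (wnorm h r%:E w) 0.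
by rewrite ler_pM2r // powR_gt0 // lt_def W0 wnorm_ge0.
Qed.

Lemma minkowski_wnorm a b :
  wnorm h r%:E (fun i => a i + b i) <= wnorm h r%:E a + wnorm h r%:E b.
Proof.
apply: wnorm_le_of_powR_bound; first by rewrite addr_ge0 ?wnorm_ge0.
rewrite mulrDl; apply: le_trans (lerD (holder_wnorm a _) (holder_wnorm b _)).
rewrite -big_split /=; apply: ler_sum => i _.
rewrite -mulrDr ler_pM2l // -mulrDl -(mulr_powRB1 (normr_ge0 _) r_gt0).
by rewrite ler_wpM2r ?powR_ge0 ?ler_normD.
Qed.

Lemma wnorm_le_pairing w y :
  \sum_i h i * (w i * sgpowR r (w i)) <= \sum_i h i * (y i * sgpowR r (w i)) ->
  wnorm h r%:E w <= wnorm h r%:E y.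
Proof.
move=> wy; apply: wnorm_le_of_powR_bound; first exact: wnorm_ge0.
apply: le_trans (holder_wnorm y w).
under eq_bigr do rewrite -(mul_sgpowR _ r_gt0).
apply: (le_trans wy); apply: ler_sum => i _; rewrite ler_pM2l //.
by rewrite (le_trans (ler_norm _)) // normrM ler_wpM2l ?norm_sgpowR.
Qed.

End FiniteExponent.

Lemma le_wnorm_oo v i : `|v i| <= wnorm h +oo%E v.
Proof. exact: le_bigmax. Qed.

Lemma wnorm_oo_le v c : 0 <= c -> (forall i, `|v i| <= c) -> wnorm h +oo%E v <= c.
Proof. by move=> c0 vc; apply: bigmax_le. Qed.

Lemma wnormD q a b : (1 <= q)%E ->
  wnorm h q (fun i => a i + b i) <= wnorm h q a + wnorm h q b.
Proof.
case: q => [r||] // r1; first by apply: minkowski_wnorm; rewrite -lee_fin.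
apply: wnorm_oo_le => [|i]; first by rewrite addr_ge0 ?wnorm_ge0.
by rewrite (le_trans (ler_normD _ _)) // lerD ?le_wnorm_oo.
Qed.

End WeightedNorms.

Lemma ler_normDr_mul_ge0 (R : realDomainType) (a b : R) :
  0 <= a * b -> `|a| <= `|a + b|.
Proof.
by move=> ab; rewrite -ler_sqr ?nnegrE // !real_normK ?num_real //; nra.
Qed.

Section DiscretePLaplacian.
Variables (R : realType) (C : finType) (h : C -> R) (p : R) (K : C -> C -> R).
Hypothesis h_gt0 : forall i, 0 < h i.
Hypothesis K_ge0 : forall i j, 0 <= K i j.
Hypothesis K_sym : forall i j, K i j = K j i.

Lemma PsiN s : Psi p (- s) = - Psi p s.
Proof. by rewrite /Psi normrN mulrN. Qed.

Lemma Psi_mulr s t : Psi p s * t = `|s| `^ (p - 2) * (s * t).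
Proof. by rewrite /Psi mulrA. Qed.

Lemma plap_accretive (phi : R -> R) w : {homo phi : a b / a <= b} ->
  0 <= \sum_i h i * (plap h p K w i * phi (w i)).
Proof.
move=> phi_homo.
pose G i j : R := h i * h j * K i j * Psi p (w j - w i).
have -> : \sum_i h i * (plap h p K w i * phi (w i))
    = - \sum_i \sum_j G i j * phi (w i).
  rewrite -sumrN; apply: eq_bigr => i _.
  rewrite /plap mulNr mulrN mulr_suml mulr_sumr; congr (- _).
  by apply: eq_bigr => j _; rewrite /G; ring.
have swap : \sum_i \sum_j G i j * phi (w i) = - \sum_i \sum_j G i j * phi (w j).
  rewrite exchange_big -sumrN; apply: eq_bigr => i _.
  rewrite -sumrN; apply: eq_bigr => j _.
  by rewrite /G K_sym -opprB PsiN; ring.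
have pair_ge0 : 0 <= \sum_i \sum_j G i j * (phi (w j) - phi (w i)).
  apply: sumr_ge0 => i _; apply: sumr_ge0 => j _.
  rewrite /G -mulrA Psi_mulr; apply: mulr_ge0.
    by apply: mulr_ge0; rewrite ?K_ge0 // mulr_ge0 ?ltW.
  apply: mulr_ge0; first exact: powR_ge0.
  have [le_ij|lt_ji] := leP (w i) (w j).
    by apply: mulr_ge0; rewrite subr_ge0 // phi_homo.
  apply: mulr_le0; rewrite subr_le0; first exact: ltW.
  by apply: phi_homo; exact: ltW.
move: pair_ge0; under eq_bigr do under eq_bigr do rewrite mulrBr.
under eq_bigr do rewrite sumrB.
rewrite sumrB swap; lra.
Qed.

Lemma mul_plap_ge0_at_max w j : (forall k, `|w k| <= `|w j|) ->
  0 <= w j * plap h p K w j.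
Proof.
move=> wj_max; rewrite /plap mulrN oppr_ge0 mulr_sumr.
apply: sumr_le0 => k _; rewrite mulrCA [w j * Psi _ _]mulrC Psi_mulr.
apply: mulr_ge0_le0; first by apply: mulr_ge0; rewrite ?K_ge0 ?ltW.
apply: mulr_ge0_le0; first exact: powR_ge0.
rewrite mulrBl subr_le0 (le_trans (ler_norm _)) // normrM -expr2.
by rewrite -real_normK ?num_real // expr2 ler_wpM2r.
Qed.

Lemma wnorm_plap_resolvent q (tau : R) w : (1 <= q)%E -> 0 <= tau ->
  wnorm h q w <= wnorm h q (fun i => w i + tau * plap h p K w i).
Proof.
case: q => [r||] q1 tau0; last exact: lexx.
  have r1 : 1 <= r by rewrite -lee_fin.
  apply: (wnorm_le_pairing h_gt0 r1); rewrite -subr_ge0 -sumrB.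
  have -> : \sum_i (h i * ((w i + tau * plap h p K w i) * sgpowR r (w i))
                    - h i * (w i * sgpowR r (w i)))
      = tau * \sum_i h i * (plap h p K w i * sgpowR r (w i)).
    by rewrite mulr_sumr; apply: eq_bigr => i _; ring.
  exact: mulr_ge0 tau0 (plap_accretive _ (sgpowR_homo r1)).
apply: wnorm_oo_le => [|i]; first exact: wnorm_ge0.
have [j _ wj_max] := @arg_maxP _ _ C i xpredT (fun k => `|w k|) isT.
apply: le_trans (wj_max i isT) _.
apply: le_trans (le_wnorm_oo h _ j).
apply: ler_normDr_mul_ge0; rewrite mulrCA mulr_ge0 //.
exact: mul_plap_ge0_at_max (fun k => wj_max k isT).
Qed.

Lemma implicit_step_wnorm q (tau : R) u0 w f : (1 <= q)%E -> 0 < tau ->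
  (forall i, (w i - u0 i) / tau = - plap h p K w i + f i) ->
  wnorm h q w <= wnorm h q u0 + tau * wnorm h q f.
Proof.
move=> q1 tau0 scheme.
have resolventE :
    (fun i => w i + tau * plap h p K w i) = (fun i => u0 i + tau * f i).
  apply: funext => i; move/(congr1 ( *%R^~ tau)): (scheme i).
  by rewrite divfK ?gt_eqF // => E; rewrite -[w i](subrK (u0 i)) E; ring.
apply: le_trans (wnorm_plap_resolvent w q1 (ltW tau0)) _; rewrite resolventE.
apply: le_trans (wnormD h_gt0 u0 (fun i => tau * f i) q1) _.
by rewrite (wnormZ h_gt0) ?gtr0_norm // gt_eqF // (lt_le_trans _ q1) ?lte01.
Qed.

End DiscretePLaplacian.

Lemma cellh_gt0 (R : realType) (d : nat) (G : grid R d) (i : cell G) :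
  0 < cellh i.
Proof. by apply: prodr_gt0 => l _; rewrite subr_gt0 gx_incr. Qed.

Lemma tindex_le (R : realType) (tt : nat -> R) (N : nat) (t : R) :
  t <= tt N -> (tindex tt N t <= N)%N.
Proof.
move=> tN; rewrite /tindex -ltnS -[X in (_ < X)%N](size_iota 0 N.+1) -has_find.
by apply/hasP; exists N; rewrite ?mem_iota /=.
Qed.

Lemma le_add_sum_increments (R : realDomainType) (a b : nat -> R) (N : nat) :
  (forall k, (1 <= k <= N)%N -> a k <= a k.-1 + b k) ->
  (forall k, (1 <= k <= N)%N -> 0 <= b k) ->
  forall k, (k <= N)%N -> a k <= a 0%N + \sum_(1 <= j < N.+1) b j.
Proof.
move=> step b_ge0.
have partial k : (k <= N)%N -> a k <= a 0%N + \sum_(1 <= j < k.+1) b j.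
  elim: k => [|k IH] kN; first by rewrite big_geq // addr0.
  rewrite big_nat_recr //= addrA.
  apply: le_trans (step k.+1 _) _; first by rewrite kN.
  by rewrite lerD2r IH // ltnW.
move=> k kN; apply: le_trans (partial k kN) _; rewrite lerD2l.
rewrite [X in _ <= X](big_cat_nat (n := k.+1)) //= lerDl big_nat_cond.
apply: sumr_ge0 => j /andP[/andP[kj jN] _]; apply: b_ge0.
by rewrite (leq_trans _ kj) //= -ltnS.
Qed.

Theorem lemma6p13 (R : realType) (d : nat) (hd : (0 < d)%N)
  (p : R) (hp : 1 < p) (q : \bar R) (hq : (1%:E <= q)%E)
  (T : R) (G : nat -> grid R d)
  (N : nat -> nat) (tt : nat -> nat -> R)
  (ht0 : forall n, tt n 0%N = 0)
  (htN : forall n, tt n (N n) = T)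
  (htinc : forall n k, (k < N n)%N -> tt n k < tt n k.+1)
  (K : forall n, cell (G n) -> cell (G n) -> R)
  (f : forall n, nat -> cell (G n) -> R)
  (g : forall n, cell (G n) -> R)
  (u : forall n, nat -> cell (G n) -> R)
  (hK0 : forall n i j, 0 <= K n i j)
  (hKs : forall n i j, K n i j = K n j i)
  (hKb : forall n, exists M, forall i, \sum_j cellh j * K n i j <= M)
  (hg : exists C, forall n, wnorm (@cellh R d (G n)) q (g n) <= C)
  (hf : exists C, forall n,
      \sum_(1 <= k < (N n).+1) (tt n k - tt n k.-1)
          * wnorm (@cellh R d (G n)) q (f n k) <= C)
  (hu0 : forall n i, u n 0%N i = g n i)
  (hscheme : forall n k, (1 <= k <= N n)%N -> forall i,
      (u n k i - u n k.-1 i) / (tt n k - tt n k.-1)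
        = - plap (@cellh R d (G n)) p (K n) (u n k) i + f n k i) :
  exists C, forall n t, 0 <= t <= T ->
    wnorm (@cellh R d (G n)) q (ubar (tt n) (N n) (u n) t) <= C.
Proof.
have [Cg gCg] := hg; have [Cf fCf] := hf.
exists (Cg + Cf) => n t /andP[_ tT].
have dt_gt0 k : (1 <= k <= N n)%N -> 0 < tt n k - tt n k.-1.
  by case: k => // k /andP[_ kN]; rewrite subr_gt0 htinc.
have u0E : u n 0%N = g n by apply/funext/hu0.
apply: le_trans (le_add_sum_increments
  (a := fun k => wnorm (@cellh R d (G n)) q (u n k)) _ _ (tindex_le _)) _.
- move=> k kN.
  apply: (implicit_step_wnorm (@cellh_gt0 R d (G n)) (hK0 n) (hKs n) hq).
  + exact: dt_gt0 k kN.
  + exact: hscheme n k kN.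
- by move=> k kN; rewrite mulr_ge0 ?wnorm_ge0 ?ltW ?dt_gt0.
- by rewrite htN.
by rewrite /= u0E lerD.
Qed.
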